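(* Let $K\ge 1$ be an integer, let $\lambda_1\ge\lambda_2\ge\cdots\ge\lambda_K>0$, $\Psi>0$, $r_{min}\ge 0$ be real numbers. For $\rho=(\rho_1,\dots,\rho_K)\in[0,\infty)^K$ define $$r_i^U(\rho)=\log_2\!\left(1+\frac{\rho_i\lambda_i}{\sum_{j=1}^{i-1}\rho_j\lambda_i+\Psi}\right),\qquad i=1,\dots,K.$$ Define $\rho_{i,min}$ recursively by $\rho_{i,min}=(2^{r_{min}}-1)\big(\sum_{j=1}^{i-1}\rho_{j,min}+\Psi/\lambda_i\big)$ (so that user $i$ gets rate exactly $r_{min}$ when every user $j$ is allocated $\rho_{j,min}$), and let $\rho_{sum}^{min}=\sum_{i=1}^K\rho_{i,min}$. For an allocation $\rho$ write $\triangle\rho_i=\rho_i-\rho_{i,min}$ and $$\rho_i^e=\Big(\triangle\rho_i-(2^{r_{min}}-1)\sum_{j=1}^{i-1}\triangle\rho_j\Big)2^{(K-i)r_{min}}$$ (the transformed excess power of user $i$). Let $\rho_U\ge\rho_{sum}^{min}$. Then, over all $\rho\in[0,\infty)^K$ with $\sum_{i=1}^K\rho_i=\rho_U$ and $r_i^U(\rho)\ge r_{min}$ for all $i$, the sum rate $\sum_{i=1}^K r_i^U(\rho)$ is maximized by allocating all the excess power to user $1$, i.e. by the allocation with $\rho_1^e=\rho_U-\rho_{sum}^{min}$ and $\rho_i^e=0$ for $i\ge 2$, and the maximum value is $$\sum_{i=1}^K r_i^U=Kr_{min}+\triangle r_1^U=Kr_{min}+\log_2\!\left(1+\frac{(\rho_U-\rho_{sum}^{min})\lambda_1}{\Psi\,2^{Kr_{min}}}\right),$$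 where $\triangle r_i^U=r_i^U(\rho)-r_{min}$ (so $\triangle r_i^U=0$ for $i\ge2$ at the optimum).
   Context: Setting: NOMA downlink with $K$ users decoded by successive interference cancellation; $\rho_i$ is the transmit SNR allocated to user $i$, $\lambda_i$ its estimated channel gain (users indexed from strongest to weakest channel), $\Psi>0$ a constant effective noise term, $r_{min}$ the minimum required unicast rate per user, $\rho_U$ the total unicast SNR. Empty sums are zero. *)

(* concrete classical reals R. Users are indexed 1..K. *)
From Stdlib Require Import Reals Lra Lia.
Open Scope R_scope.

Fixpoint sum1 (n : nat) (f : nat -> R) : R :=
  match n with
  | O => 0
  | S m => sum1 m f + f (S m)
  end.

Definition log2 (x : R) : R := ln x / ln 2.

Definition pow2 (x : R) : R := Rpower 2 x.

Definition rU (lam : nat -> R) (Psi : R) (rho : nat -> R) (i : nat) : R :=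
  log2 (1 + rho i * lam i / (sum1 (i - 1) rho * lam i + Psi)).

Definition sumrate (K : nat) (lam : nat -> R) (Psi : R) (rho : nat -> R) : R :=
  sum1 K (rU lam Psi rho).

Definition rho_e (K : nat) (rmin : R) (rhomin rho : nat -> R) (i : nat) : R :=
  ((rho i - rhomin i)
   - (pow2 rmin - 1) * sum1 (i - 1) (fun j => rho j - rhomin j))
  * pow2 (INR (K - i) * rmin).

Definition feasible (K : nat) (lam : nat -> R) (Psi rmin rhoU : R)
  (rho : nat -> R) : Prop :=
  (forall i, (1 <= i <= K)%nat -> 0 <= rho i) /\
  sum1 K rho = rhoU /\
  (forall i, (1 <= i <= K)%nat -> rU lam Psi rho i >= rmin).

From Stdlib Require Import Reals Lra Lia.
Open Scope R_scope.

(* Write [a = 2^rmin], [mu_i = Psi / lam_i] (nondecreasing in [i]), [S_n] for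
   the power of the first [n] users and [e_n = S_n - S^min_n] for its excess
   over the minimal allocation.  User [i]'s rate is [log2 g_i] with
   [g_i (S_{i-1} + mu_i) = S_i + mu_i], and the recursion defining [rho_min]
   reads [S^min_i + mu_i = a (S^min_{i-1} + mu_i)]; subtracting gives
   [(g_i - a) (S_{i-1} + mu_i) = e_i - a e_{i-1}], which is also
   [rho^e_i / a^(K-i)].  Hence the rate constraints say [g_i >= a], and
   [rho^e_i = 0] says [g_i = a].  By induction,
   [g_1 ... g_n <= a^n + e_n / mu_1], the defect of each step being
   [(g_{n+1} - a) ((S^min_n + mu_{n+1}) / mu_1 - a^n) >= 0] because
   [S^min_n + mu_{n+1} >= a^n mu_1] (here the ordering of the [lam_i] is
   used).  Taking [log2] at [n = K], where [e_K = rho_U - rho^min_sum], bounds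
   the sum rate, with equality when [g_i = a] for every [i >= 2]. *)

Fixpoint prod1 (n : nat) (f : nat -> R) : R :=
  match n with
  | O => 1
  | S m => prod1 m f * f (S m)
  end.

Lemma ln2_pos : 0 < ln 2.
Proof. rewrite <- ln_1. apply ln_increasing; lra. Qed.

Lemma log2_le x y : 0 < x -> x <= y -> log2 x <= log2 y.
Proof.
  intros Hx [Hxy | <-]; [|lra].
  apply Rmult_le_compat_r.
  - left. apply Rinv_0_lt_compat, ln2_pos.
  - left. now apply ln_increasing.
Qed.

Lemma log2_lt x y : 0 < x -> x < y -> log2 x < log2 y.
Proof.
  intros Hx Hxy. apply Rmult_lt_compat_r.
  - apply Rinv_0_lt_compat, ln2_pos.
  - now apply ln_increasing.
Qed.

Lemma log2_mult x y : 0 < x -> 0 < y -> log2 (x * y) = log2 x + log2 y.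
Proof.
  intros Hx Hy. unfold log2. rewrite ln_mult by assumption.
  field. apply Rgt_not_eq, ln2_pos.
Qed.

Lemma log2_pow2 r : log2 (pow2 r) = r.
Proof.
  unfold log2, pow2, Rpower. rewrite ln_exp.
  field. apply Rgt_not_eq, ln2_pos.
Qed.

Lemma pow2_pos r : 0 < pow2 r.
Proof. apply exp_pos. Qed.

Lemma pow2_ge_1 r : 0 <= r -> 1 <= pow2 r.
Proof.
  intros Hr. unfold pow2, Rpower. rewrite <- exp_0.
  destruct Hr as [Hr | <-].
  - left. apply exp_increasing. pose proof ln2_pos. nra.
  - rewrite Rmult_0_l. lra.
Qed.

Lemma pow2_INR_mult n r : pow2 (INR n * r) = pow2 r ^ n.
Proof.
  unfold pow2. rewrite Rmult_comm, <- Rpower_mult.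
  apply Rpower_pow, exp_pos.
Qed.

Lemma sum1_plus n f g : sum1 n (fun i => f i + g i) = sum1 n f + sum1 n g.
Proof. induction n as [|n IH]; simpl; [lra | rewrite IH; lra]. Qed.

Lemma sum1_minus n f g : sum1 n (fun i => f i - g i) = sum1 n f - sum1 n g.
Proof. induction n as [|n IH]; simpl; [lra | rewrite IH; lra]. Qed.

Lemma sum1_nonneg n f :
  (forall i, (1 <= i <= n)%nat -> 0 <= f i) -> 0 <= sum1 n f.
Proof.
  induction n as [|n IH]; intros Hf; simpl; [lra|].
  assert (0 <= sum1 n f) by (apply IH; intros; apply Hf; lia).
  assert (0 <= f (S n)) by (apply Hf; lia).
  lra.
Qed.

Lemma sum1_succ_const_tail k f r :
  (forall i, (2 <= i <= S k)%nat -> f i = r) -> sum1 (S k) f = f 1%nat + INR k * r.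
Proof.
  induction k as [|k IH]; intros Hf; [simpl; lra|].
  change (sum1 (S (S k)) f) with (sum1 (S k) f + f (S (S k))).
  rewrite IH, (Hf (S (S k))), S_INR; [ring | lia |].
  intros i Hi. apply Hf. lia.
Qed.

Lemma prod1_pos n f : (forall i, (1 <= i <= n)%nat -> 0 < f i) -> 0 < prod1 n f.
Proof.
  induction n as [|n IH]; intros Hf; simpl; [lra|].
  apply Rmult_lt_0_compat; [apply IH; intros; apply Hf; lia | apply Hf; lia].
Qed.

Lemma log2_prod1 n f :
  (forall i, (1 <= i <= n)%nat -> 0 < f i) ->
  sum1 n (fun i => log2 (f i)) = log2 (prod1 n f).
Proof.
  induction n as [|n IH]; intros Hf; simpl.
  - unfold log2. rewrite ln_1. unfold Rdiv. ring.
  - assert (Hprod : 0 < prod1 n f) by (apply prod1_pos; intros; apply Hf; lia).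
    rewrite IH, log2_mult; [reflexivity | exact Hprod | apply Hf; lia |].
    intros i Hi. apply Hf. lia.
Qed.

Lemma prod1_le_telescoping n (t B : nat -> R) :
  B 0%nat = 1 ->
  (forall m, (m < n)%nat -> 0 <= t (S m) /\ B m * t (S m) <= B (S m)) ->
  prod1 n t <= B n.
Proof.
  intros HB0 Hstep. induction n as [|n IH]; simpl; [lra|].
  destruct (Hstep n) as [Ht HB]; [lia|].
  assert (prod1 n t <= B n) by (apply IH; intros; apply Hstep; lia).
  apply Rle_trans with (B n * t (S n)); [|exact HB].
  now apply Rmult_le_compat_r.
Qed.

Lemma prod1_eq_telescoping n (t B : nat -> R) :
  B 0%nat = 1 ->
  (forall m, (m < n)%nat -> B m * t (S m) = B (S m)) ->
  prod1 n t = B n.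
Proof.
  intros HB0 Hstep. induction n as [|n IH]; simpl; [easy|].
  rewrite IH by (intros; apply Hstep; lia). apply Hstep. lia.
Qed.

Lemma nonincreasing_ge_last (f : nat -> R) (K : nat) :
  (forall i, (1 <= i < K)%nat -> f (S i) <= f i) ->
  forall i, (1 <= i <= K)%nat -> f K <= f i.
Proof.
  intros Hdec i Hi. remember (K - i)%nat as d eqn:Hd. revert i Hi Hd.
  induction d as [|d IH]; intros i Hi Hd.
  - replace i with K by lia. lra.
  - apply Rle_trans with (f (S i)); [apply IH; lia | apply Hdec; lia].
Qed.

Definition geometric_increments (a delta : R) (i : nat) : R :=
  match i with
  | O => 0
  | 1 => delta
  | S (S j) => (a - 1) * a ^ j * delta
  end.

Lemma sum1_geometric_increments a delta j :
  sum1 (S j) (geometric_increments a delta) = a ^ j * delta.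
Proof.
  induction j as [|j IH]; [simpl; ring|].
  change (sum1 (S (S j)) (geometric_increments a delta))
    with (sum1 (S j) (geometric_increments a delta) + (a - 1) * a ^ j * delta).
  rewrite IH. simpl. ring.
Qed.

Lemma geometric_increments_nonneg a delta i :
  1 <= a -> 0 <= delta -> 0 <= geometric_increments a delta i.
Proof.
  intros Ha Hdelta. destruct i as [|[|j]]; simpl; try lra.
  assert (0 < a ^ j) by (apply pow_lt; lra).
  apply Rmult_le_pos; [apply Rmult_le_pos|]; lra.
Qed.

Definition gain (lam : nat -> R) (Psi : R) (rho : nat -> R) (i : nat) : R :=
  1 + rho i * lam i / (sum1 (i - 1) rho * lam i + Psi).

Definition excess (rhomin rho : nat -> R) (n : nat) : R :=
  sum1 n rho - sum1 n rhomin.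

Section SumRate.

Variables (K : nat) (lam : nat -> R) (Psi rmin : R) (rhomin : nat -> R).

Hypothesis HK : (1 <= K)%nat.
Hypothesis Hlam_ord : forall i, (1 <= i < K)%nat -> lam (S i) <= lam i.
Hypothesis Hlam_pos : lam K > 0.
Hypothesis HPsi : Psi > 0.
Hypothesis Hrmin : rmin >= 0.
Hypothesis Hrhomin : forall i, (1 <= i <= K)%nat ->
  rhomin i = (pow2 rmin - 1) * (sum1 (i - 1) rhomin + Psi / lam i).

Local Notation a := (pow2 rmin).
Local Notation mu i := (Psi / lam i).
Local Notation bound rho n := (a ^ n + excess rhomin rho n / mu 1%nat).
Local Notation nonneg rho := (forall i, (1 <= i <= K)%nat -> 0 <= rho i).

Lemma a_ge_1 : 1 <= a.
Proof. apply pow2_ge_1. lra. Qed.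

Lemma lam_pos i : (1 <= i <= K)%nat -> 0 < lam i.
Proof. intros Hi. pose proof (nonincreasing_ge_last lam K Hlam_ord i Hi). lra. Qed.

Lemma mu_pos i : (1 <= i <= K)%nat -> 0 < mu i.
Proof. intros Hi. apply Rdiv_lt_0_compat; [lra | now apply lam_pos]. Qed.

Lemma mu_le_succ n : (1 <= n < K)%nat -> mu n <= mu (S n).
Proof.
  intros Hn. apply Rmult_le_compat_l; [lra|].
  apply Rinv_le_contravar; [apply lam_pos; lia | apply Hlam_ord; lia].
Qed.

Lemma sum1_rhomin_succ n : (n < K)%nat ->
  sum1 (S n) rhomin + mu (S n) = a * (sum1 n rhomin + mu (S n)).
Proof.
  intros Hn. change (sum1 (S n) rhomin) with (sum1 n rhomin + rhomin (S n)).
  rewrite (Hrhomin (S n)) by lia. replace (S n - 1)%nat with n by lia.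
  ring.
Qed.

Lemma sum1_rhomin_nonneg n : (n <= K)%nat -> 0 <= sum1 n rhomin.
Proof.
  induction n as [|n IH]; intros Hn; [simpl; lra|].
  pose proof (IH ltac:(lia)). pose proof (sum1_rhomin_succ n ltac:(lia)).
  pose proof (mu_pos (S n) ltac:(lia)). pose proof a_ge_1.
  nra.
Qed.

Lemma rhomin_nonneg : nonneg rhomin.
Proof.
  intros i Hi. rewrite Hrhomin by assumption.
  pose proof (sum1_rhomin_nonneg (i - 1) ltac:(lia)).
  pose proof (mu_pos i Hi). pose proof a_ge_1.
  apply Rmult_le_pos; lra.
Qed.

Lemma rhomin_geometric n : (n < K)%nat ->
  a ^ n * mu 1%nat <= sum1 n rhomin + mu (S n).
Proof.
  induction n as [|n IH]; intros Hn; [simpl; lra|].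
  pose proof (IH ltac:(lia)). pose proof (sum1_rhomin_succ n ltac:(lia)).
  pose proof (mu_le_succ (S n) ltac:(lia)). pose proof a_ge_1.
  change (a ^ S n) with (a * a ^ n).
  nra.
Qed.

Lemma gain_ge_1 rho i : nonneg rho -> (1 <= i <= K)%nat -> 1 <= gain lam Psi rho i.
Proof.
  intros Hnn Hi. unfold gain.
  assert (0 <= sum1 (i - 1) rho) by (apply sum1_nonneg; intros; apply Hnn; lia).
  pose proof (lam_pos i Hi). pose proof (Hnn i Hi).
  assert (0 <= rho i * lam i / (sum1 (i - 1) rho * lam i + Psi)).
  { apply Rmult_le_pos; [nra|]. left. apply Rinv_0_lt_compat. nra. }
  lra.
Qed.

Lemma gain_mul rho n : (n < K)%nat -> 0 <= sum1 n rho ->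
  gain lam Psi rho (S n) * (sum1 n rho + mu (S n)) = sum1 (S n) rho + mu (S n).
Proof.
  intros Hn Hs. pose proof (lam_pos (S n) ltac:(lia)).
  unfold gain. replace (S n - 1)%nat with n by lia.
  change (sum1 (S n) rho) with (sum1 n rho + rho (S n)).
  field. split; nra.
Qed.

Lemma gain_excess rho n : (n < K)%nat -> 0 <= sum1 n rho ->
  (gain lam Psi rho (S n) - a) * (sum1 n rho + mu (S n))
  = excess rhomin rho (S n) - a * excess rhomin rho n.
Proof.
  intros Hn Hs. rewrite Rmult_minus_distr_r, gain_mul by assumption.
  pose proof (sum1_rhomin_succ n Hn). unfold excess. lra.
Qed.

Lemma rho_e_excess rho n : (n < K)%nat ->
  rho_e K rmin rhomin rho (S n)
  = (excess rhomin rho (S n) - a * excess rhomin rho n) * a ^ (K - S n).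
Proof.
  intros Hn. unfold rho_e, excess.
  rewrite pow2_INR_mult, sum1_minus. replace (S n - 1)%nat with n by lia.
  change (sum1 (S n) rho) with (sum1 n rho + rho (S n)).
  change (sum1 (S n) rhomin) with (sum1 n rhomin + rhomin (S n)).
  ring.
Qed.

Lemma gain_ge_of_rate rho i : nonneg rho -> (1 <= i <= K)%nat ->
  rU lam Psi rho i >= rmin -> a <= gain lam Psi rho i.
Proof.
  intros Hnn Hi Hrate. destruct (Rle_or_lt a (gain lam Psi rho i)) as [|Hlt]; [easy|].
  pose proof (gain_ge_1 rho i Hnn Hi).
  apply log2_lt in Hlt; [|lra].
  change (rU lam Psi rho i) with (log2 (gain lam Psi rho i)) in Hrate.
  rewrite log2_pow2 in Hlt. lra.
Qed.

Lemma rate_ge_of_excess rho n : nonneg rho -> (n < K)%nat ->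
  a * excess rhomin rho n <= excess rhomin rho (S n) -> rU lam Psi rho (S n) >= rmin.
Proof.
  intros Hnn Hn He.
  assert (Hs : 0 <= sum1 n rho) by (apply sum1_nonneg; intros; apply Hnn; lia).
  pose proof (gain_excess rho n Hn Hs). pose proof (mu_pos (S n) ltac:(lia)).
  assert (a <= gain lam Psi rho (S n)).
  { apply Rnot_lt_le. intros Hlt.
    assert ((gain lam Psi rho (S n) - a) * (sum1 n rho + mu (S n)) < 0)
      by (apply Rmult_neg_pos; lra).
    lra. }
  change (rU lam Psi rho (S n)) with (log2 (gain lam Psi rho (S n))).
  rewrite <- (log2_pow2 rmin). apply Rle_ge, log2_le; [apply pow2_pos | easy].
Qed.

Lemma gain_eq_of_rho_e_zero rho i : nonneg rho -> (1 <= i <= K)%nat ->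
  rho_e K rmin rhomin rho i = 0 -> gain lam Psi rho i = a.
Proof.
  intros Hnn Hi He. destruct i as [|n]; [lia|].
  assert (Hs : 0 <= sum1 n rho) by (apply sum1_nonneg; intros; apply Hnn; lia).
  rewrite rho_e_excess, <- gain_excess in He by (lia || assumption).
  pose proof (pow_lt a (K - S n) (pow2_pos rmin)).
  pose proof (mu_pos (S n) Hi).
  apply Rmult_integral in He as [He | He]; [|lra].
  apply Rmult_integral in He as [He | He]; lra.
Qed.

Lemma bound_defect rho n : (n < K)%nat -> 0 <= sum1 n rho ->
  bound rho (S n) - bound rho n * gain lam Psi rho (S n)
  = (gain lam Psi rho (S n) - a) * ((sum1 n rhomin + mu (S n)) / mu 1%nat - a ^ n).
Proof.
  intros Hn Hs. pose proof (lam_pos 1 ltac:(lia)).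
  replace (excess rhomin rho (S n))
    with (a * excess rhomin rho n
          + (gain lam Psi rho (S n) - a) * (sum1 n rho + mu (S n)))
    by (rewrite gain_excess by assumption; ring).
  unfold excess. change (a ^ S n) with (a * a ^ n).
  pose proof (lam_pos (S n) ltac:(lia)).
  field. repeat split; lra.
Qed.

Lemma bound_0 rho : bound rho 0%nat = 1.
Proof. pose proof (lam_pos 1 ltac:(lia)). unfold excess. simpl. field. split; lra. Qed.

Lemma prod_gain_le rho : nonneg rho ->
  (forall i, (1 <= i <= K)%nat -> a <= gain lam Psi rho i) ->
  prod1 K (gain lam Psi rho) <= bound rho K.
Proof.
  intros Hnn Hga. apply prod1_le_telescoping with (B := fun m => bound rho m).
  { apply bound_0. }
  intros m Hm.
  assert (Hs : 0 <= sum1 m rho) by (apply sum1_nonneg; intros; apply Hnn; lia).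
  pose proof (bound_defect rho m Hm Hs).
  pose proof (Hga (S m) ltac:(lia)). pose proof a_ge_1.
  pose proof (rhomin_geometric m Hm). pose proof (mu_pos 1 ltac:(lia)).
  pose proof (lam_pos 1 ltac:(lia)). pose proof (lam_pos (S m) ltac:(lia)).
  assert (0 <= (sum1 m rhomin + mu (S m)) / mu 1%nat - a ^ m).
  { replace ((sum1 m rhomin + mu (S m)) / mu 1%nat - a ^ m)
      with ((sum1 m rhomin + mu (S m) - a ^ m * mu 1%nat) / mu 1%nat)
      by (field; repeat split; lra).
    apply Rmult_le_pos; [lra | left; now apply Rinv_0_lt_compat]. }
  assert (0 <= (gain lam Psi rho (S m) - a)
               * ((sum1 m rhomin + mu (S m)) / mu 1%nat - a ^ m))
    by (apply Rmult_le_pos; lra).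
  split; lra.
Qed.

Lemma prod_gain_eq rho : nonneg rho ->
  (forall i, (2 <= i <= K)%nat -> gain lam Psi rho i = a) ->
  prod1 K (gain lam Psi rho) = bound rho K.
Proof.
  intros Hnn Hga. apply prod1_eq_telescoping with (B := fun m => bound rho m).
  { apply bound_0. }
  intros m Hm.
  assert (Hs : 0 <= sum1 m rho) by (apply sum1_nonneg; intros; apply Hnn; lia).
  pose proof (bound_defect rho m Hm Hs) as Hdefect.
  destruct m as [|j].
  - pose proof (lam_pos 1 ltac:(lia)).
    replace ((sum1 0 rhomin + mu 1%nat) / mu 1%nat - a ^ 0) with 0
      in Hdefect by (simpl; field; split; lra).
    lra.
  - rewrite (Hga (S (S j))) in Hdefect |- * by lia. lra.
Qed.

Lemma sumrate_log2_prod rho : nonneg rho ->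
  sumrate K lam Psi rho = log2 (prod1 K (gain lam Psi rho)).
Proof.
  intros Hnn. apply (log2_prod1 K (gain lam Psi rho)). intros i Hi.
  pose proof (gain_ge_1 rho i Hnn Hi). lra.
Qed.

Lemma log2_bound rho rhoU : sum1 K rho = rhoU -> rhoU >= sum1 K rhomin ->
  log2 (bound rho K)
  = INR K * rmin
    + log2 (1 + (rhoU - sum1 K rhomin) * lam 1%nat / (Psi * pow2 (INR K * rmin))).
Proof.
  intros Hsum HrhoU.
  pose proof (lam_pos 1 ltac:(lia)). pose proof (pow_lt a K (pow2_pos rmin)).
  rewrite pow2_INR_mult, <- (log2_pow2 (INR K * rmin)), pow2_INR_mult.
  rewrite <- log2_mult.
  - f_equal. unfold excess. rewrite Hsum. field. lra.
  - assumption.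
  - assert (0 <= (rhoU - sum1 K rhomin) * lam 1%nat / (Psi * a ^ K)).
    { apply Rmult_le_pos; [nra|]. left. apply Rinv_0_lt_compat. nra. }
    lra.
Qed.

Lemma sumrate_le_optimum rhoU rho :
  rhoU >= sum1 K rhomin -> feasible K lam Psi rmin rhoU rho ->
  sumrate K lam Psi rho
  <= INR K * rmin
     + log2 (1 + (rhoU - sum1 K rhomin) * lam 1%nat / (Psi * pow2 (INR K * rmin))).
Proof.
  intros HrhoU (Hnn & Hsum & Hrate).
  rewrite sumrate_log2_prod, <- (log2_bound rho rhoU) by assumption.
  apply log2_le.
  - apply prod1_pos. intros i Hi. pose proof (gain_ge_1 rho i Hnn Hi). lra.
  - apply prod_gain_le; [easy|]. intros i Hi. apply gain_ge_of_rate; auto.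
Qed.

Lemma sumrate_excess_to_first_user rhoU rho :
  rhoU >= sum1 K rhomin -> feasible K lam Psi rmin rhoU rho ->
  (forall i, (2 <= i <= K)%nat -> rho_e K rmin rhomin rho i = 0) ->
  sumrate K lam Psi rho
  = INR K * rmin
    + log2 (1 + (rhoU - sum1 K rhomin) * lam 1%nat / (Psi * pow2 (INR K * rmin))) /\
  sumrate K lam Psi rho = INR K * rmin + (rU lam Psi rho 1%nat - rmin) /\
  (forall i, (2 <= i <= K)%nat -> rU lam Psi rho i = rmin).
Proof.
  intros HrhoU (Hnn & Hsum & _) He.
  assert (Hga : forall i, (2 <= i <= K)%nat -> gain lam Psi rho i = a)
    by (intros i Hi; apply gain_eq_of_rho_e_zero; auto; lia).
  assert (Hr : forall i, (2 <= i <= K)%nat -> rU lam Psi rho i = rmin).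
  { intros i Hi. change (rU lam Psi rho i) with (log2 (gain lam Psi rho i)).
    rewrite Hga by assumption. apply log2_pow2. }
  split; [|split; [|exact Hr]].
  - rewrite sumrate_log2_prod, prod_gain_eq by assumption. now apply log2_bound.
  - unfold sumrate. destruct K as [|k]; [lia|].
    rewrite (sum1_succ_const_tail k _ rmin Hr), S_INR. ring.
Qed.

Lemma excess_to_first_user_feasible rhoU : rhoU >= sum1 K rhomin ->
  exists rho, feasible K lam Psi rmin rhoU rho /\
    rho_e K rmin rhomin rho 1%nat = rhoU - sum1 K rhomin /\
    (forall i, (2 <= i <= K)%nat -> rho_e K rmin rhomin rho i = 0).
Proof.
  intros HrhoU. pose proof a_ge_1.
  assert (Hak : 0 < a ^ (K - 1)) by (apply pow_lt; lra).
  (* The excess of the first [n] users is [a^(n-1) delta], so [e_K = rho_U - rho^min_sum]. *)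
  set (delta := (rhoU - sum1 K rhomin) / a ^ (K - 1)).
  assert (Hdelta : 0 <= delta)
    by (apply Rmult_le_pos; [lra | left; now apply Rinv_0_lt_compat]).
  set (rho := fun i => rhomin i + geometric_increments a delta i).
  assert (Hex : forall n, excess rhomin rho n = sum1 n (geometric_increments a delta))
    by (intros n; unfold excess, rho; rewrite sum1_plus; ring).
  assert (Hstep0 : excess rhomin rho 1 - a * excess rhomin rho 0 = delta)
    by (rewrite !Hex; simpl; ring).
  assert (Hstep : forall j, excess rhomin rho (S (S j)) - a * excess rhomin rho (S j) = 0)
    by (intros j; rewrite !Hex, !sum1_geometric_increments; simpl; ring).
  assert (Hnn : nonneg rho).
  { intros i Hi. pose proof (rhomin_nonneg i Hi).
    pose proof (geometric_increments_nonneg a delta i ltac:(lra) Hdelta).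
    unfold rho. lra. }
  exists rho. split; [split; [|split]|split].
  - exact Hnn.
  - pose proof (Hex K) as HexK. unfold excess in HexK.
    destruct K as [|k]; [lia|].
    rewrite sum1_geometric_increments in HexK. unfold delta in HexK.
    replace (S k - 1)%nat with k in HexK, Hak by lia.
    field_simplify in HexK; lra.
  - intros [|n] Hi; [lia|]. apply rate_ge_of_excess; [easy | lia |].
    destruct n; [lra|].
    specialize (Hstep n). lra.
  - rewrite rho_e_excess, Hstep0 by lia. unfold delta. field. lra.
  - intros [|[|j]] Hi; [lia|lia|].
    rewrite rho_e_excess, Hstep by lia. ring.
Qed.

End SumRate.

Theorem proposition2 (K : nat) (lam : nat -> R) (Psi rmin rhoU : R)
  (rhomin : nat -> R)
  (HK : (1 <= K)%nat)
  (Hlam_ord : forall i, (1 <= i < K)%nat -> lam (S i) <= lam i)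
  (Hlam_pos : lam K > 0)
  (HPsi : Psi > 0)
  (Hrmin : rmin >= 0)
  (Hrhomin : forall i, (1 <= i <= K)%nat ->
     rhomin i = (pow2 rmin - 1) * (sum1 (i - 1) rhomin + Psi / lam i))
  (HrhoU : rhoU >= sum1 K rhomin) :
  let V := INR K * rmin
           + log2 (1 + (rhoU - sum1 K rhomin) * lam 1%nat
                       / (Psi * pow2 (INR K * rmin))) in
  (* the "all excess power to user 1" allocation exists and is feasible *)
  (exists rho, feasible K lam Psi rmin rhoU rho /\
     rho_e K rmin rhomin rho 1%nat = rhoU - sum1 K rhomin /\
     (forall i, (2 <= i <= K)%nat -> rho_e K rmin rhomin rho i = 0)) /\
  (* any such allocation attains V, with users i >= 2 at exactly rmin *)
  (forall rho, feasible K lam Psi rmin rhoU rho ->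
     rho_e K rmin rhomin rho 1%nat = rhoU - sum1 K rhomin ->
     (forall i, (2 <= i <= K)%nat -> rho_e K rmin rhomin rho i = 0) ->
     sumrate K lam Psi rho = V /\
     sumrate K lam Psi rho = INR K * rmin + (rU lam Psi rho 1%nat - rmin) /\
     (forall i, (2 <= i <= K)%nat -> rU lam Psi rho i = rmin)) /\
  (* V is the maximum sum rate over all feasible allocations *)
  (forall rho, feasible K lam Psi rmin rhoU rho -> sumrate K lam Psi rho <= V).
Proof.
  intros V. split; [|split].
  - eapply excess_to_first_user_feasible; eassumption.
  - intros rho Hf _ He. eapply sumrate_excess_to_first_user; eassumption.
  - intros rho Hf. eapply sumrate_le_optimum; eassumption.
Qed.
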